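(* For all $X,Y\in\mathbb{R}$ and all integers $p,q\geq1$, \begin{align*} \binom{p+q}{q}\mathcal{B}_{p}(X+Y)\mathcal{B}_{q}(Y) &=\sum_{j=0}^{p+q}\binom{p+q}{j}\binom{p+q-1-j}{q-1}\mathcal{B}_{p+q-j}(Y)\mathcal{B}_{j}(X)\\ &\quad+\sum_{h=0}^{q}\binom{p+q}{h}\binom{p+q-1-h}{p-1}(-1)^{h}\mathcal{B}_{p+q-h}(X+Y)\mathcal{B}_{h}(X). \end{align*}
   Context: $B_n(x)$ denotes the $n$th Bernoulli polynomial, defined by $\frac{te^{xt}}{e^t-1}=\sum_{n\ge0}B_n(x)\frac{t^n}{n!}$, and $\mathcal{B}_n(x)=B_n(x-[x])$ is the $n$th Bernoulli function, where $[x]$ is the largest integer $\le x$ (so $\mathcal{B}_0\equiv1$ and $\mathcal{B}_1(m)=-1/2$ for $m\in\mathbb{Z}$). Binomial coefficients with integer upper entry $n$ (possibly negative) and integer lower entry $k\ge0$ are $\binom{n}{k}=\frac{n(n-1)\cdots(n-k+1)}{k!}$; in particular $\binom{-1}{k}=(-1)^k$ and $\binom{n}{k}=0$ for $0\le n<k$. *)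

From HB Require Import structures.
From mathcomp Require Import all_boot all_order all_algebra.
From mathcomp Require Import reals.
Set Implicit Arguments. Unset Strict Implicit. Unset Printing Implicit Defensive.
Import Order.TTheory GRing.Theory Num.Theory.
Local Open Scope ring_scope.

(* Bernoulli numbers b_0, ..., b_n (convention b_1 = -1/2, i.e. t/(e^t-1)),
   via the standard recursion  b_n = -1/(n+1) * sum_{k<n} C(n+1,k) b_k. *)
Fixpoint bnums (R : realType) (n : nat) : seq R :=
  match n with
  | 0 => [:: 1]
  | n'.+1 => let s := bnums R n' in
      rcons s (- (n'.+2)%:R^-1 * \sum_(k < n'.+1) ('C(n'.+2, k))%:R * s`_k)
  end.

Definition bernnum (R : realType) (n : nat) : R := (bnums R n)`_n.

Definition bernpoly (R : realType) (n : nat) (x : R) : R :=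
  \sum_(k < n.+1) ('C(n, k))%:R * bernnum R k * x ^+ (n - k).

Definition bernfun (R : realType) (n : nat) (x : R) : R :=
  bernpoly n (x - (Num.floor x)%:~R).

Definition binomZ (R : realType) (n : int) (k : nat) : R :=
  (\prod_(i < k) ((n - i%:Z)%:~R : R)) / (k`!)%:R.

(* Write x = {X} and y = {Y}; then {X + Y} = x + y + a with a = 0 or a = -1,
   and the identity becomes D_p(x) = 0, where D_p(x) is the difference of its
   two sides written with Bernoulli polynomials, for fixed q, y and a.
   Since B_n' = n B_(n-1), differentiation in x gives D_(p+1)' = (p+1+q) D_p,
   and D_1 is constant.  Moreover D_p(1) = D_p(0): this follows from
   B_n(x + 1) - B_n(x) = n x^(n-1), the reflection B_n(1 - x) = (-1)^n B_n(x)
   and two binomial identities, and it is the one place where a = 0 or a = -1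
   is needed.  These three properties force D_p = 0 for all p: if D_p is
   constant then D_(p+1) is affine with slope (p+1+q) D_p and takes the same
   value at 0 and 1, so D_p = 0 and D_(p+1) is constant. *)

From mathcomp Require Import all_boot all_order all_algebra.
From mathcomp Require Import reals.
From mathcomp Require Import ring lra zify.
From mathcomp Require Import boolp functions normedtype derive realfun.
Import GRing.Theory Num.Theory numFieldNormedType.Exports.
Local Open Scope ring_scope.

Section Calculus.
Context {R : realType}.
Implicit Types (f g : R -> R) (x c k : R).

Lemma is_derive_sumf {n} {F : 'I_n -> R -> R} {dF : 'I_n -> R} {x} :
  (forall i, is_derive x 1 (F i) (dF i)) ->
  is_derive x 1 (fun t => \sum_(i < n) F i t) (\sum_(i < n) dF i).
Proof.
move=> dFx; have -> : (fun t => \sum_(i < n) F i t) = \sum_(i < n) F i.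
  by apply/funext => t; rewrite fct_sumE.
exact: is_derive_sum.
Qed.

Lemma is_derive_mulf {f g df dg x} :
  is_derive x 1 f df -> is_derive x 1 g dg ->
  is_derive x 1 (fun t => f t * g t) (f x * dg + g x * df).
Proof. exact: is_deriveM. Qed.

Lemma is_derive_subf {f g df dg x} :
  is_derive x 1 f df -> is_derive x 1 g dg ->
  is_derive x 1 (fun t => f t - g t) (df - dg).
Proof. exact: is_deriveB. Qed.

Lemma is_derive_scalef k {f df x} :
  is_derive x 1 f df -> is_derive x 1 (fun t => k * f t) (k * df).
Proof. exact: is_deriveZ. Qed.

Lemma is_derive_exprn m x : is_derive x 1 (fun t : R => t ^+ m) (m%:R * x ^+ m.-1).
Proof.
have -> : (fun t : R => t ^+ m) = horner 'X^m by apply/funext => t; rewrite hornerXn.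
by apply: is_derive_eq; rewrite derivXn hornerMn hornerXn mulr_natl.
Qed.

Lemma is_derive_comp_addr {f c df x} :
  is_derive (x + c) 1 f df -> is_derive x 1 (fun t => f (t + c)) df.
Proof.
move=> dfx; have := @is_derive1_comp R f (shift c) x df 1 dfx (is_derive_shift x 1 c).
by rewrite mulr1.
Qed.

Lemma is_derive_comp_opp {f df x} :
  is_derive (- x) 1 f df -> is_derive x 1 (fun t => f (- t)) (- df).
Proof.
move=> dfx; have := @is_derive1_comp R f -%R x df (- 1) dfx (is_deriveNid x 1).
by rewrite mulrN1.
Qed.

Lemma affine_of_derive_cst {f k} :
  (forall x, is_derive x 1 f k) -> forall x, f x = f 0 + k * x.
Proof.
move=> dfk x.
have dg (t : R) : is_derive t 1 (fun s => f s - k * s) 0.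
  by apply: is_derive_eq; rewrite /GRing.scale /= mulr1 subrr.
by have := is_derive_0_is_cst x 0 dg; rewrite mulr0 subr0 => <-; rewrite subrK.
Qed.

Section AppellSequence.
Variables (f : nat -> R -> R) (c : nat -> R).
Hypothesis is_derive_fS : forall n x, is_derive x 1 (f n.+1) (c n * f n x).

Lemma appell_seq_eq0 :
  (forall x, f 0 x = 0) -> (forall n, f n.+1 0 = 0) -> forall n x, f n x = 0.
Proof.
move=> f0 fS0; elim=> [|n IHn] // x.
have dfS (t : R) : is_derive t 1 (f n.+1) 0 by rewrite -(mulr0 (c n)) -(IHn t).
by rewrite (affine_of_derive_cst dfS) fS0 mul0r addr0.
Qed.

Lemma periodic_appell_seq_eq0 :
  (forall x, is_derive x 1 (f 0) 0) -> (forall n, c n != 0) ->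
  (forall n, f n.+1 1 = f n.+1 0) -> forall n x, f n x = 0.
Proof.
move=> df0 cn0 fS1.
have affine_fS n :
    (forall t, f n t = f n 0) -> forall x, f n.+1 x = f n.+1 0 + c n * f n 0 * x.
  by move=> fn_cst; apply: affine_of_derive_cst => t; rewrite -(fn_cst t).
have vanish n : (forall t, f n t = f n 0) -> f n 0 = 0.
  move=> /affine_fS /(_ 1); rewrite fS1 mulr1 -{1}[f n.+1 0]addr0 => /addrI/esym/eqP.
  by rewrite mulf_eq0 (negPf (cn0 n)) => /eqP.
suff fn_cst n : forall t, f n t = f n 0 by move=> n x; rewrite fn_cst vanish.
elim: n => [|n IHn] t; first by apply: is_derive_0_is_cst.
by rewrite affine_fS // (vanish n) // mulr0 mul0r addr0.
Qed.

End AppellSequence.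
End Calculus.

Section Bernoulli.
Context {R : realType}.
Implicit Types (x t w : R).
Local Notation b := (bernnum R).
Local Notation B := (@bernpoly R).

Lemma size_bnums n : size (bnums R n) = n.+1.
Proof. by elim: n => //= n IHn; rewrite size_rcons IHn. Qed.

Lemma nth_bnums n k : (k <= n)%N -> (bnums R n)`_k = b k.
Proof.
rewrite /bernnum; elim: n => [|n IHn]; first by rewrite leqn0 => /eqP ->.
rewrite leq_eqVlt => /predU1P[-> //|kn].
by rewrite /= nth_rcons size_bnums kn IHn.
Qed.

Lemma bernnum0 : b 0 = 1.
Proof. by []. Qed.

Lemma bernnumS n :
  b n.+1 = - (n.+2)%:R^-1 * \sum_(k < n.+1) 'C(n.+2, k)%:R * b k.
Proof.
rewrite {1}/bernnum /= nth_rcons size_bnums ltnn eqxx.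
by congr (_ * _); apply: eq_bigr => k _; rewrite nth_bnums // -ltnS.
Qed.

Lemma sum_bin_bernnum n : \sum_(k < n.+2) 'C(n.+2, k)%:R * b k = 0.
Proof.
rewrite big_ord_recr /= bernnumS binSn mulrA mulrN mulrV ?mulN1r ?subrr //.
by rewrite unitfE pnatr_eq0.
Qed.

Lemma bernpoly0 x : B 0 x = 1.
Proof. by rewrite /bernpoly big_ord1 mul1r expr0 mulr1. Qed.

Lemma bernpoly_at0 n : B n 0 = b n.
Proof.
rewrite /bernpoly big_ord_recr /= subnn binn mul1r mulr1 big1 ?add0r // => k _.
by rewrite expr0n subn_eq0 leqNgt ltn_ord mulr0.
Qed.

Lemma bernpoly_at1 n : B n 1 = b n + (n == 1)%:R.
Proof.
case: n => [|[|n]]; first by rewrite bernpoly0 addr0.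
  rewrite /bernpoly !big_ord_recr big_ord0 (bernnumS 0) big_ord1 /= bernnum0.
  by rewrite !bin0 binn expr1n !mulr1 !mul1r add0r addrC.
rewrite /bernpoly big_ord_recr /= subnn binn mul1r expr0 mulr1 addr0.
under eq_bigr do rewrite expr1n mulr1.
by rewrite sum_bin_bernnum add0r.
Qed.

Lemma bernpoly_at1_sub n : B n 1 - B n 0 = (n == 1)%:R.
Proof. by rewrite bernpoly_at1 bernpoly_at0 addrAC subrr add0r. Qed.

Lemma is_derive_bernpoly n x : is_derive x 1 (B n) (n%:R * B n.-1 x).
Proof.
have dterm (k : 'I_n.+1) :=
  is_derive_scalef ('C(n, k)%:R * b k) (is_derive_exprn (n - k) x).
apply: is_derive_eq (is_derive_sumf dterm) _.
case: n dterm => [|n] _; first by rewrite big_ord1 mul0r mulr0 mul0r.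
rewrite big_ord_recr /= subnn mul0r mulr0 addr0 /bernpoly mulr_sumr.
apply: eq_bigr => k _; have kn : (k <= n)%N := ltnSE (ltn_ord k).
have bin_down : ('C(n.+1, k) * (n - k).+1 = n.+1 * 'C(n, k))%N.
  by rewrite mulnC -subSn // -mul_bin_down.
rewrite subSn //=.
transitivity (('C(n.+1, k) * (n - k).+1)%:R * (b k * x ^+ (n - k))).
  by rewrite natrM; ring.
by rewrite bin_down natrM; ring.
Qed.

Lemma bernpolyD1 n t : B n (t + 1) = B n t + n%:R * t ^+ n.-1.
Proof.
pose d n t := B n (t + 1) - B n t - n%:R * t ^+ n.-1.
suff /(_ n t)/eqP : forall n t, d n t = 0.
  by rewrite /d subr_eq0 subr_eq => /eqP ->; rewrite addrC.
apply: (@appell_seq_eq0 _ d (fun n => n.+1%:R)) => [m x||m].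
- apply: is_derive_eq (is_derive_subf (is_derive_subf
    (is_derive_comp_addr (is_derive_bernpoly _ _)) (is_derive_bernpoly _ x))
    (is_derive_scalef _ (is_derive_exprn _ x))) _.
  by rewrite /d /=; case: m => [|m] /=; ring.
- by move=> x; rewrite /d !bernpoly0 mul0r !subrr.
- by rewrite /d add0r bernpoly_at1 bernpoly_at0 expr0n; case: m => [|m] /=; ring.
Qed.

Lemma bernpoly1B n t : B n (1 - t) = (-1) ^+ n * B n t.
Proof.
pose d n t := B n (- t + 1) - (-1) ^+ n * B n t.
have dd m x : is_derive x 1 (d m) (- m%:R * d m.-1 x).
  apply: is_derive_eq (is_derive_subf
    (is_derive_comp_opp (is_derive_comp_addr (is_derive_bernpoly _ _)))
    (is_derive_scalef _ (is_derive_bernpoly _ x))) _.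
  by rewrite /d; case: m => [|m] /=; rewrite ?exprS; ring.
suff /(_ n t)/eqP : forall n t, d n t = 0 by rewrite /d subr_eq0 addrC => /eqP.
apply: (@periodic_appell_seq_eq0 _ d (fun m => - m.+1%:R) (fun m => dd m.+1)) => [x|m|m].
- by apply: is_derive_eq (dd 0 x) _; rewrite mulNr mul0r oppr0.
- by rewrite oppr_eq0 pnatr_eq0.
- rewrite /d addNr oppr0 add0r bernpoly_at1 bernpoly_at0.
  by case: m => [|m] /=; rewrite ?expr1; ring.
Qed.

Lemma bernpolyD1E n w :
  B n (w + 1) = \sum_(k < n.+1) 'C(n, k)%:R * ((-1) ^+ k * b k) * w ^+ (n - k).
Proof.
have -> : w + 1 = 1 - (- w) by rewrite opprK addrC.
rewrite bernpoly1B /bernpoly mulr_sumr; apply: eq_bigr => k _.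
have kn : (k <= n)%N by rewrite -ltnS.
have sign_sq : (-1) ^+ (n - k) * (-1) ^+ (n - k) = 1 :> R.
  by rewrite -exprD -signr_odd oddD addbb.
rewrite -{1}(subnKC kn) exprD [(- w) ^+ _]exprNn.
transitivity ('C(n, k)%:R * ((-1) ^+ k * b k) * w ^+ (n - k)
              * ((-1) ^+ (n - k) * (-1) ^+ (n - k))); first ring.
by rewrite sign_sq mulr1.
Qed.

End Bernoulli.

Lemma mul_bin_bin n j h : (h <= j)%N -> (j <= n)%N ->
  ('C(n, j) * 'C(j, h) = 'C(n, h) * 'C(n - h, j - h))%N.
Proof.
move=> hj jn; have hn := leq_trans hj jn.
have fact_pos : (0 < h`! * (j - h)`! * (n - j)`!)%N by rewrite !muln_gt0 !fact_gt0.
apply/eqP; rewrite -(eqn_pmul2r fact_pos); apply/eqP.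
transitivity n`!; first by rewrite -(bin_fact jn) -(bin_fact hj); ring.
rewrite -(bin_fact hn) -(@bin_fact (n - h) (j - h)) ?leq_sub2r //.
by rewrite (_ : n - h - (j - h) = n - j)%N; [ring | lia].
Qed.

Lemma bin_trinomial m q h : (h <= q)%N ->
  ('C(m.+1 + q, h) * 'C(m + q - h, m) * (m.+1 + q - h)
   = 'C(m.+1 + q, q) * m.+1 * 'C(q, h))%N.
Proof.
move=> hq.
have diag : ((m.+1 + q - h) * 'C(m + q - h, m) = m.+1 * 'C(m.+1 + q - h, q - h))%N.
  have -> : (m + q - h = (m.+1 + q - h).-1)%N by lia.
  rewrite mul_bin_diag -(@bin_sub _ (q - h)); last by lia.
  by congr (_ * 'C(_, _))%N; lia.
rewrite -mulnA [(_ * (_ - h))%N]mulnC diag.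
by rewrite mulnCA -(@mul_bin_bin (m.+1 + q) q h) ?leq_addl //; ring.
Qed.

Lemma mul_bin_diag2 m k :
  ('C((m + k).+2, k.+1) * k.+1 * m.+1 = (m + k).+2 * (m + k).+1 * 'C(m + k, m))%N.
Proof.
rewrite [('C(_, _) * _)%N]mulnC -mul_bin_diag /= -mulnA.
rewrite -(@bin_sub (m + k).+1 k) ?leqW ?leq_addl //.
rewrite (_ : (m + k).+1 - k = m.+1)%N; last by lia.
by rewrite [('C(_, _) * _)%N]mulnC -mul_bin_diag mulnA.
Qed.

Section IntegerBinomial.
Context {R : realType}.
Local Notation binomZ := (binomZ R).

Lemma binomZ0 n : binomZ n 0 = 1.
Proof. by rewrite /binomZ big_ord0 divr1. Qed.

Lemma binomZ_pascal n k : binomZ n k.+1 = binomZ (n - 1) k.+1 + binomZ (n - 1) k.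
Proof.
pose P := \prod_(i < k) ((n - 1 - i%:Z)%:~R : R).
have prodSl : \prod_(i < k.+1) ((n - i%:Z)%:~R : R) = n%:~R * P.
  rewrite big_ord_recl subr0; congr (_ * _); apply: eq_bigr => i _.
  by congr (_%:~R); rewrite lift0; lia.
rewrite /binomZ prodSl big_ord_recr -/P factS natrM !intrB.
have kfact_neq0 : (k`!%:R : R) != 0 by rewrite pnatr_eq0 -lt0n fact_gt0.
rewrite /= -[1%:~R]/(1 : R) -[k%:~R]/(k%:R : R).
by field; rewrite kfact_neq0 addrC natr1 pnatr_eq0.
Qed.

Lemma binomZ_nat n k : binomZ n%:Z k = 'C(n, k)%:R.
Proof.
elim: n k => [|n IHn] [|k]; rewrite ?binomZ0 ?bin0 //.
  by rewrite /binomZ big_ord_recl subr0 !mul0r.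
by rewrite binomZ_pascal binS natrD -!IHn; congr (binomZ _ _ + binomZ _ _); lia.
Qed.

Lemma binomZ_N1 k : binomZ (-1) k = (-1) ^+ k.
Proof.
elim: k => [|k IHk]; first exact: binomZ0.
have /esym/eqP := binomZ_pascal 0 k.
by rewrite binomZ_nat bin0n sub0r IHk addr_eq0 exprS mulN1r => /eqP.
Qed.

End IntegerBinomial.

Section BernoulliConvolution.
Context {R : realType}.
Implicit Types (x c : R) (e : nat -> R).
Local Notation B := (@bernpoly R).

Lemma sum_mul_eq1 n (F : nat -> R) : (1 < n)%N ->
  \sum_(j < n) F j * (j == 1 :> nat)%:R = F 1.
Proof.
move=> n_gt1; rewrite (eq_bigr (fun j : 'I_n => if j == 1 :> nat then F j else 0)).
  by rewrite -big_mkcond big_ord1_eq n_gt1.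
by move=> j _; case: eqP; rewrite ?mulr1 ?mulr0.
Qed.

Lemma is_derive_bern_conv n s e c x :
  is_derive x 1
    (fun t => \sum_(h < s.+1) 'C(n.+1, h)%:R * e h * B (n.+1 - h) (t + c) * B h t)
    (n.+1%:R * (\sum_(h < s) 'C(n, h)%:R * (e h + e h.+1) * B (n - h) (x + c) * B h x
                + 'C(n, s)%:R * e s * B (n - s) (x + c) * B s x)).
Proof.
have dterm (h : 'I_s.+1) := is_derive_mulf
  (is_derive_scalef ('C(n.+1, h)%:R * e h)
    (is_derive_comp_addr (is_derive_bernpoly (n.+1 - h) (x + c))))
  (is_derive_bernpoly h x).
apply: is_derive_eq (is_derive_sumf dterm) _; rewrite big_split /=.
set z := x + c.
have dB_right : \sum_(h < s.+1) 'C(n.+1, h)%:R * e h * B (n.+1 - h) z * (h%:R * B h.-1 x)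
    = n.+1%:R * \sum_(h < s) 'C(n, h)%:R * e h.+1 * B (n - h) z * B h x.
  rewrite big_ord_recl mul0r mulr0 add0r mulr_sumr; apply: eq_bigr => h _.
  have binS_diag : ('C(n.+1, h.+1) * h.+1 = n.+1 * 'C(n, h))%N.
    by rewrite mulnC -mul_bin_diag.
  rewrite lift0 subSS /=.
  transitivity (('C(n.+1, h.+1) * h.+1)%:R * (e h.+1 * B (n - h) z * B h x)).
    by rewrite natrM; ring.
  by rewrite binS_diag natrM; ring.
have dB_left : \sum_(h < s.+1)
      B h x * ('C(n.+1, h)%:R * e h * ((n.+1 - h)%:R * B (n.+1 - h).-1 z))
    = n.+1%:R * \sum_(h < s.+1) 'C(n, h)%:R * e h * B (n - h) z * B h x.
  rewrite mulr_sumr; apply: eq_bigr => h _.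
  have bin_down : ('C(n.+1, h) * (n.+1 - h) = n.+1 * 'C(n, h))%N.
    by rewrite mulnC -mul_bin_down.
  rewrite subSKn.
  transitivity (('C(n.+1, h) * (n.+1 - h))%:R * (e h * B (n - h) z * B h x)).
    by rewrite natrM; ring.
  by rewrite bin_down natrM; ring.
rewrite dB_right dB_left big_ord_recr /= -mulrDr addrA -big_split /=.
by congr (_ * (_ + _)); apply: eq_bigr => h _; ring.
Qed.

Lemma bernpoly_mul_at1_sub L n h c :
  L * B n (1 + c) * B h 1 - L * B n (0 + c) * B h 0
  = L * (n%:R * c ^+ n.-1 * bernnum R h) + L * B n (c + 1) * (h == 1)%:R.
Proof. rewrite add0r [1 + c]addrC bernpoly_at1 bernpoly_at0 bernpolyD1; ring. Qed.

End BernoulliConvolution.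

Section Defect.
Context {R : realType}.
Variables (k : nat) (a y : R).
Implicit Types (x : R).
Local Notation q := k.+1.
Local Notation b := (bernnum R).
Local Notation B := (@bernpoly R).
Local Notation binomZ := (binomZ R).

Definition bern_lhs p x := 'C(p + q, q)%:R * B p (x + (y + a)) * B q y.

Definition bern_rhs1 p x := \sum_(j < (p + q).+1)
  'C(p + q, j)%:R * binomZ ((p + q)%:Z - 1 - j%:Z) (q - 1) * B (p + q - j) y * B j x.

Definition bern_rhs2 p x := \sum_(h < q.+1)
  'C(p + q, h)%:R * binomZ ((p + q)%:Z - 1 - h%:Z) (p - 1) * (-1) ^+ h
    * B (p + q - h) (x + (y + a)) * B h x.

(* D_p(x) of the proof idea, for q = k.+1 and {X + Y} = x + (y + a). *)
Definition bern_defect p x := bern_lhs p x - bern_rhs1 p x - bern_rhs2 p x.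

Lemma is_derive_bern_lhs p x :
  is_derive x 1 (bern_lhs p.+1) ((p.+1 + q)%:R * bern_lhs p x).
Proof.
apply: is_derive_eq (is_derive_mulf (is_derive_scalef _
  (is_derive_comp_addr (is_derive_bernpoly p.+1 _))) (is_derive_cst (B q y) x 1)) _.
have bin_down : ('C(p.+1 + q, q) * p.+1 = (p.+1 + q) * 'C(p + q, q))%N.
  by rewrite -[(p + q)%N]/((p.+1 + q).-1) mul_bin_down addnK mulnC.
rewrite /bern_lhs /cst mulr0 add0r /=.
transitivity (('C(p.+1 + q, q) * p.+1)%:R * B p (x + (y + a)) * B q y).
  by rewrite natrM; ring.
by rewrite bin_down natrM; ring.
Qed.

Lemma is_derive_bern_rhs1 p x :
  is_derive x 1 (bern_rhs1 p.+1) ((p.+1 + q)%:R * bern_rhs1 p x).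
Proof.
pose coef j := 'C(p.+1 + q, j)%:R * binomZ ((p.+1 + q)%:Z - 1 - j%:Z) (q - 1)
               * B (p.+1 + q - j) y.
have dterm (j : 'I_(p.+1 + q).+1) :=
  is_derive_mulf (is_derive_cst (coef j) x 1) (is_derive_bernpoly j x).
apply: is_derive_eq (is_derive_sumf dterm) _.
rewrite big_ord_recl /= /cst !mul0r !mulr0 !addr0 add0r addSn mulr_sumr.
apply: eq_bigr => j _; rewrite /bump /= add0n add1n mulr0 addr0 /coef subSS.
have binS_diag : ('C((p + q).+1, j.+1) * j.+1 = (p + q).+1 * 'C(p + q, j))%N.
  by rewrite mulnC -mul_bin_diag.
rewrite (_ : (p + q).+1%:Z - 1 - j.+1%:Z = (p + q)%:Z - 1 - j%:Z); last by lia.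
transitivity (('C((p + q).+1, j.+1) * j.+1)%:R *
  (binomZ ((p + q)%:Z - 1 - j%:Z) (q - 1) * B (p + q - j) y * B j x)).
  by rewrite natrM; ring.
by rewrite binS_diag natrM; ring.
Qed.

Lemma is_derive_bern_rhs2 p x :
  is_derive x 1 (bern_rhs2 p.+2) ((p.+2 + q)%:R * bern_rhs2 p.+1 x).
Proof.
pose e h := binomZ ((p.+2 + q)%:Z - 1 - h%:Z) p.+1 * (-1) ^+ h.
have -> : bern_rhs2 p.+2 = fun t => \sum_(h < q.+1)
    'C((p.+1 + q).+1, h)%:R * e h * B ((p.+1 + q).+1 - h) (t + (y + a)) * B h t.
  by apply/funext => t; apply: eq_bigr => h _; rewrite [in RHS]mulrA.
apply: is_derive_eq (is_derive_bern_conv _ _ _ _ _) _.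
rewrite /bern_rhs2 [in RHS]big_ord_recr /= subn1 /=; congr (_ * (_ + _)).
  apply: eq_bigr => h _; rewrite -[_ * _ * (-1) ^+ h]mulrA; congr (_ * _ * _ * _).
  rewrite /e exprS mulN1r mulrN -mulrBl; congr (_ * _).
  rewrite binomZ_pascal.
  rewrite (_ : (p.+2 + q)%:Z - 1 - h%:Z - 1 = (p.+2 + q)%:Z - 1 - h.+1%:Z); last by lia.
  by rewrite addrAC subrr add0r; congr binomZ; lia.
rewrite /e (_ : (p.+2 + q)%:Z - 1 - q%:Z = p.+1%:Z); last by lia.
rewrite (_ : (p.+1 + q)%:Z - 1 - q%:Z = p%:Z); last by lia.
by rewrite !binomZ_nat !binn mul1r mulr1.
Qed.

Lemma is_derive_bern_rhs2_1 x :
  is_derive x 1 (bern_rhs2 1) ((1 + q)%:R * ((-1) ^+ q * B q x)).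
Proof.
have -> : bern_rhs2 1 = fun t => \sum_(h < q.+1)
    'C(q.+1, h)%:R * (-1) ^+ h * B (q.+1 - h) (t + (y + a)) * B h t.
  by apply/funext => t; apply: eq_bigr => h _; rewrite binomZ0 mulr1.
apply: is_derive_eq (is_derive_bern_conv _ _ _ _ _) _.
rewrite big1 => [|h _]; last by rewrite exprS mulN1r subrr mulr0 !mul0r.
by rewrite add0r binn subnn bernpoly0 mul1r mulr1.
Qed.

Lemma bern_rhs1_0 x : bern_rhs1 0 x = B q y + (-1) ^+ k * B q x.
Proof.
rewrite /bern_rhs1 add0n big_ord_recl big_ord_recr big1 => [|j _]; rewrite lift0 /=.
  rewrite add0r bin0 binn subn0 subnn !bernpoly0 subn1 /= !mulr1 !mul1r.
  rewrite (_ : q%:Z - 1 - 0%:Z = k%:Z); last by lia.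
  rewrite (_ : q%:Z - 1 - q%:Z = -1); last by lia.
  by rewrite binomZ_nat binn binomZ_N1 mul1r.
rewrite subn1 /= (_ : q%:Z - 1 - j.+1%:Z = (k - j.+1)%N%:Z); last by have := ltn_ord j; lia.
by rewrite binomZ_nat (@bin_small (k - j.+1)) ?mulr0 ?mul0r //; have := ltn_ord j; lia.
Qed.

Lemma is_derive_bern_defectS p x :
  is_derive x 1 (bern_defect p.+2) ((p.+2 + q)%:R * bern_defect p.+1 x).
Proof.
apply: is_derive_eq (is_derive_subf (is_derive_subf (is_derive_bern_lhs _ _)
  (is_derive_bern_rhs1 _ _)) (is_derive_bern_rhs2 _ _)) _.
by rewrite /bern_defect; ring.
Qed.

Lemma is_derive_bern_defect1 x : is_derive x 1 (bern_defect 1) 0.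
Proof.
apply: is_derive_eq (is_derive_subf (is_derive_subf (is_derive_bern_lhs _ _)
  (is_derive_bern_rhs1 _ _)) (is_derive_bern_rhs2_1 _)) _.
rewrite bern_rhs1_0 /bern_lhs add0n binn bernpoly0 exprS; ring.
Qed.

Lemma bern_lhs_at1_sub p : bern_lhs p.+1 1 - bern_lhs p.+1 0 =
  'C(p.+1 + q, q)%:R * (p.+1%:R * (y + a) ^+ p) * B q y.
Proof. rewrite /bern_lhs add0r [1 + _]addrC bernpolyD1 /=; ring. Qed.

Lemma bern_rhs1_at1_sub p : bern_rhs1 p.+1 1 - bern_rhs1 p.+1 0 =
  'C(p.+1 + q, 1)%:R * binomZ ((p.+1 + q)%:Z - 1 - 1) k * B (p.+1 + q - 1) y.
Proof.
pose F j := 'C(p.+1 + q, j)%:R * binomZ ((p.+1 + q)%:Z - 1 - j%:Z) (q - 1)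
             * B (p.+1 + q - j) y.
rewrite /bern_rhs1 -sumrB.
under eq_bigr do rewrite -mulrBr bernpoly_at1_sub.
by rewrite (@sum_mul_eq1 _ _ F) // /F subn1.
Qed.

Lemma bern_rhs2_at1_sub p : bern_rhs2 p.+1 1 - bern_rhs2 p.+1 0 =
  'C(p.+1 + q, q)%:R * (p.+1%:R * (y + a) ^+ p) * B q (y + a + 1)
  - 'C(p.+1 + q, 1)%:R * binomZ ((p.+1 + q)%:Z - 1 - 1) p * B (p.+1 + q - 1) (y + a + 1).
Proof.
pose F h := 'C(p.+1 + q, h)%:R * binomZ ((p.+1 + q)%:Z - 1 - h%:Z) (p.+1 - 1) * (-1) ^+ h
             * B (p.+1 + q - h) (y + a + 1).
rewrite /bern_rhs2 -sumrB.
under eq_bigr do rewrite bernpoly_mul_at1_sub.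
rewrite big_split /= (@sum_mul_eq1 _ _ F) // /F subn1 /= expr1 mulrN1 mulNr.
congr (_ - _); rewrite bernpolyD1E mulr_sumr; apply: eq_bigr => h _.
have hq : (h <= q)%N by rewrite -ltnS.
rewrite (_ : (p.+1 + q)%:Z - 1 - h%:Z = (p + q - h)%N%:Z); last by lia.
rewrite (_ : (p.+1 + q - h).-1 = p + (q - h))%N; last by lia.
rewrite binomZ_nat exprD.
transitivity (('C(p.+1 + q, h) * 'C(p + q - h, p) * (p.+1 + q - h))%:R
  * (-1) ^+ h * (y + a) ^+ p * (y + a) ^+ (q - h) * b h); first by rewrite !natrM; ring.
by rewrite bin_trinomial // !natrM; ring.
Qed.

Lemma bern_defect_at1 p : a = 0 \/ a = -1 -> bern_defect p.+1 1 = bern_defect p.+1 0.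
Proof.
move=> ha; apply/eqP; rewrite -subr_eq0; apply/eqP.
have -> : bern_defect p.+1 1 - bern_defect p.+1 0 =
    (bern_lhs p.+1 1 - bern_lhs p.+1 0) - (bern_rhs1 p.+1 1 - bern_rhs1 p.+1 0)
    - (bern_rhs2 p.+1 1 - bern_rhs2 p.+1 0) by rewrite /bern_defect; ring.
rewrite bern_lhs_at1_sub bern_rhs1_at1_sub bern_rhs2_at1_sub.
rewrite (_ : (p.+1 + q)%:Z - 1 - 1 = (p + k)%N%:Z); last by lia.
rewrite (_ : (p.+1 + q - 1 = (p + k).+1)%N); last by lia.
rewrite (_ : (p.+1 + q = (p + k).+2)%N); last by lia.
have bin_sym : 'C(p + k, k) = 'C(p + k, p) by rewrite -(@bin_sub (p + k) p) ?leq_addr // addKn.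
rewrite !binomZ_nat bin_sym; case: ha => ->; last by rewrite subrK; ring.
rewrite !addr0 !bernpolyD1 /= bin1 exprD.
transitivity (y ^+ p * y ^+ k * (((p + k).+2 * (p + k).+1 * 'C(p + k, p))%:R
                                - ('C((p + k).+2, k.+1) * k.+1 * p.+1)%:R)).
  by rewrite !natrM; ring.
by rewrite mul_bin_diag2 subrr mulr0.
Qed.

Lemma bern_defect_eq0 p x : a = 0 \/ a = -1 -> bern_defect p.+1 x = 0.
Proof.
move=> ha; apply: (@periodic_appell_seq_eq0 _ (fun p => bern_defect p.+1)
  (fun p => (p.+2 + q)%:R) is_derive_bern_defectS is_derive_bern_defect1) => [m|m].
  by rewrite pnatr_eq0.
exact: bern_defect_at1.
Qed.

End Defect.

Lemma frac_add {R : archiRealFieldType} (X Y : R) :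
  exists2 a : R, a = 0 \/ a = -1 &
    X + Y - (Num.floor (X + Y))%:~R
    = X - (Num.floor X)%:~R + (Y - (Num.floor Y)%:~R + a).
Proof.
set e := Num.floor (X + Y) - Num.floor X - Num.floor Y.
exists (- e%:~R); last by rewrite /e !intrB; ring.
have frac_bounds (Z : R) : 0 <= Z - (Num.floor Z)%:~R < 1.
  by rewrite subr_ge0 floor_le ltrBlDl -[1]/(1%:~R) -intrD floorD1_gt.
have /andP[lbX ubX] := frac_bounds X; have /andP[lbY ubY] := frac_bounds Y.
have /andP[lbXY ubXY] := frac_bounds (X + Y).
have e_gtN1 : (-1 < e)%R by rewrite -(ltr_int R) mulrN1z /e !intrB; lra.
have e_lt2 : (e < 2)%R by rewrite -(ltr_int R) /e !intrB; lra.
have [->|->] : e = 0 \/ e = 1 by lia.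
  by left; rewrite oppr0.
by right.
Qed.

Theorem theorem3 (R : realType) (X Y : R) (p q : nat) :
  (1 <= p)%N -> (1 <= q)%N ->
  ('C(p + q, q))%:R * bernfun p (X + Y) * bernfun q Y =
    \sum_(j < (p + q).+1)
      ('C(p + q, j))%:R * binomZ R ((p + q)%:Z - 1 - j%:Z) (q - 1)
        * bernfun (p + q - j) Y * bernfun j X
  + \sum_(h < q.+1)
      ('C(p + q, h))%:R * binomZ R ((p + q)%:Z - 1 - h%:Z) (p - 1)
        * (-1) ^+ h * bernfun (p + q - h) (X + Y) * bernfun h X.
Proof.
case: p => // m _; case: q => // k _.
have [a a_01 frac_XY] := frac_add X Y.
rewrite /bernfun frac_XY; apply/eqP; rewrite -subr_eq0 opprD addrA; apply/eqP.
exact: bern_defect_eq0.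
Qed.
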